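(* Let $(n_k)_{k\ge0}$ be a strictly increasing sequence of positive integers such that $n_k$ divides $n_{k+1}$ for every $k\ge0$ and $\limsup_{k\to\infty}n_{k+1}/n_k=+\infty$. Then there exists a compact perfect subset $K$ of $\mathbb{T}$ containing the point $1$ such that $\lambda^{n_k}\to1$ uniformly on $K$.
   Context: $\mathbb{T}$ is the unit circle in $\mathbb{C}$. *)

From Stdlib Require Import Reals Lra Lia Arith.
Open Scope R_scope.

Definition Cplx := (R * R)%type.
Definition Cone : Cplx := (1, 0).
Definition Cmul (z w : Cplx) : Cplx :=
  (fst z * fst w - snd z * snd w, fst z * snd w + snd z * fst w).
Fixpoint Cpow (z : Cplx) (n : nat) : Cplx :=
  match n with O => Cone | S m => Cmul z (Cpow z m) end.
Definition Cmod (z : Cplx) : R := sqrt (fst z * fst z + snd z * snd z).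
Definition Cdist (z w : Cplx) : R := Cmod (fst z - fst w, snd z - snd w).

Definition unit_circle (z : Cplx) : Prop := Cmod z = 1.

Definition Cset := Cplx -> Prop.

Definition Cseq_cv (u : nat -> Cplx) (l : Cplx) : Prop :=
  forall eps, 0 < eps -> exists N, forall m, (N <= m)%nat -> Cdist (u m) l < eps.

(* compactness (sequential compactness, equivalent to compactness in C) *)
Definition compact_set (K : Cset) : Prop :=
  forall u : nat -> Cplx, (forall m, K (u m)) ->
    exists (phi : nat -> nat) (l : Cplx),
      (forall m, (phi m < phi (S m))%nat) /\ K l /\ Cseq_cv (fun m => u (phi m)) l.

Definition closed_set (K : Cset) : Prop :=
  forall z, (forall eps, 0 < eps -> exists w, K w /\ Cdist z w < eps) -> K z.

Definition perfect_set (K : Cset) : Prop :=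
  closed_set K /\
  forall z, K z -> forall eps, 0 < eps -> exists w, K w /\ w <> z /\ Cdist z w < eps.

Definition unif_pow_to_one (n : nat -> nat) (K : Cset) : Prop :=
  forall eps, 0 < eps -> exists N, forall k, (N <= k)%nat ->
    forall z, K z -> Cdist (Cpow z (n k)) Cone < eps.

(* Choose indices k_0 < k_1 < ... with n_(k_j + 1) > 2^(j+1) n_(k_j), put m_j := n_(k_j + 1),
   and let K be the closure of the points e^(2 pi i x), x a finite sum of distinct 1 / m_j.
   For k >= k_L the number n_k x is an integer plus the terms with k <= k_j, and these sum to
   at most sum_(j >= L) 2^(-j-1) = 2^(-L); hence lambda^(n_k) -> 1 uniformly on these points,
   and on K because lambda |-> lambda^(n_k) is n_k-Lipschitz on T.  Appending a term 1 / m_j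
   with j large gives a distinct nearby point, so K is perfect; it is closed in T, hence
   compact, and contains 1 as the empty sum. *)

From Stdlib Require Import Reals Arith Lra Lia Classical ClassicalEpsilon.
From Coquelicot Require Complex.
Open Scope R_scope.

Lemma Cmod_Coquelicot (z : Cplx) : Cmod z = Complex.Cmod z.
Proof. unfold Cmod, Complex.Cmod; f_equal; simpl; ring. Qed.

Lemma Cdist_Coquelicot (z w : Cplx) : Cdist z w = Complex.Cmod (Complex.Cminus z w).
Proof. unfold Cdist; rewrite Cmod_Coquelicot; reflexivity. Qed.

Lemma Cpow_Coquelicot (z : Cplx) (m : nat) : Cpow z m = Complex.Cpow z m.
Proof. induction m as [|m IH]; simpl; [reflexivity | now rewrite IH]. Qed.

Lemma Cdist_sym (z w : Cplx) : Cdist z w = Cdist w z.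
Proof. unfold Cdist, Cmod; simpl; f_equal; ring. Qed.

Lemma Cdist_refl (z : Cplx) : Cdist z z = 0.
Proof. unfold Cdist, Cmod; simpl; rewrite <- sqrt_0; f_equal; ring. Qed.

Lemma Cdist_triangle (x y z : Cplx) : Cdist x z <= Cdist x y + Cdist y z.
Proof.
  rewrite !Cdist_Coquelicot.
  replace (Complex.Cminus x z)
    with (Complex.Cplus (Complex.Cminus x y) (Complex.Cminus y z)).
  - apply Complex.Cmod_triangle.
  - destruct x, y, z; unfold Complex.Cminus, Complex.Cplus, Complex.Copp; simpl.
    f_equal; ring.
Qed.

Lemma Cmod_le_Cdist (z w : Cplx) : Cmod z <= Cdist z w + Cmod w.
Proof.
  rewrite !Cmod_Coquelicot, Cdist_Coquelicot.
  replace z with (Complex.Cplus (Complex.Cminus z w) w) at 1.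
  - apply Complex.Cmod_triangle.
  - destruct z, w; unfold Complex.Cminus, Complex.Cplus, Complex.Copp; simpl.
    f_equal; ring.
Qed.

Lemma Cdist_le_coords (z w : Cplx) :
  Cdist z w <= Rabs (fst z - fst w) + Rabs (snd z - snd w).
Proof.
  unfold Cdist, Cmod; simpl.
  set (x := fst z - fst w); set (y := snd z - snd w).
  pose proof (Rabs_pos x); pose proof (Rabs_pos y).
  rewrite <- (sqrt_Rsqr (Rabs x + Rabs y)) by lra.
  apply sqrt_le_1_alt; unfold Rsqr.
  rewrite <- (Rabs_pos_eq (x * x)), <- (Rabs_pos_eq (y * y)), !Rabs_mult
    by apply Rle_0_sqr.
  nra.
Qed.

Lemma unit_circle_coords (z : Cplx) :
  unit_circle z -> -1 <= fst z <= 1 /\ -1 <= snd z <= 1.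
Proof.
  unfold unit_circle, Cmod; intros Hz.
  assert (fst z * fst z + snd z * snd z = 1).
  { rewrite <- (sqrt_sqrt (fst z * fst z + snd z * snd z)) by nra.
    rewrite Hz; ring. }
  split; nra.
Qed.

Lemma unit_circle_Cpow (z : Cplx) (m : nat) : unit_circle z -> unit_circle (Cpow z m).
Proof.
  unfold unit_circle; rewrite Cpow_Coquelicot, !Cmod_Coquelicot, Complex.Cmod_pow.
  intros ->; apply pow1.
Qed.

(* [z^(m+1) - w^(m+1) = z (z^m - w^m) + (z - w) w^m] *)
Lemma Cdist_Cpow_le (z w : Cplx) (m : nat) : unit_circle z -> unit_circle w ->
  Cdist (Cpow z m) (Cpow w m) <= INR m * Cdist z w.
Proof.
  intros Hz Hw; induction m as [|m IH].
  - simpl; rewrite Cdist_refl; lra.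
  - pose proof (unit_circle_Cpow w m Hw) as Hwm.
    unfold unit_circle in Hz, Hwm; rewrite Cmod_Coquelicot in Hz, Hwm.
    rewrite !Cdist_Coquelicot in IH |- *; rewrite S_INR.
    simpl Cpow; set (a := Cpow z m) in *; set (b := Cpow w m) in *.
    replace (Complex.Cminus (Cmul z a) (Cmul w b))
      with (Complex.Cplus (Complex.Cmult z (Complex.Cminus a b))
                          (Complex.Cmult (Complex.Cminus z w) b)).
    + eapply Rle_trans; [apply Complex.Cmod_triangle|].
      rewrite !Complex.Cmod_mult, Hz, Hwm; lra.
    + destruct z, w, a, b; unfold Cmul, Complex.Cminus, Complex.Cplus, Complex.Cmult,
        Complex.Copp; simpl; f_equal; ring.
Qed.

Definition e2pi (a : R) : Cplx := (cos (2 * PI * a), sin (2 * PI * a)).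

Lemma e2pi_unit_circle (a : R) : unit_circle (e2pi a).
Proof.
  unfold unit_circle, Cmod, e2pi; simpl; rewrite <- sqrt_1; f_equal.
  pose proof (sin2_cos2 (2 * PI * a)); unfold Rsqr in *; lra.
Qed.

Lemma e2pi_nat (p : nat) : e2pi (INR p) = Cone.
Proof.
  unfold e2pi, Cone.
  replace (2 * PI * INR p) with (0 + 2 * INR p * PI) by ring.
  now rewrite cos_period, sin_period, cos_0, sin_0.
Qed.

Lemma Cpow_e2pi (a : R) (m : nat) : Cpow (e2pi a) m = e2pi (INR m * a).
Proof.
  induction m as [|m IH].
  - rewrite Rmult_0_l; exact (eq_sym (e2pi_nat 0)).
  - simpl Cpow; rewrite IH, S_INR; unfold e2pi, Cmul; simpl.
    replace (2 * PI * ((INR m + 1) * a)) with (2 * PI * a + 2 * PI * (INR m * a)) by ring.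
    rewrite cos_plus, sin_plus; f_equal; ring.
Qed.

Lemma Cdist_e2pi (a b : R) : Cdist (e2pi a) (e2pi b) = 2 * Rabs (sin (PI * (a - b))).
Proof.
  unfold Cdist, Cmod, e2pi; simpl.
  set (A := 2 * PI * a); set (B := 2 * PI * b); set (s := sin (PI * (a - b))).
  replace (_ * _ + _ * _) with (2 - 2 * cos (A - B)).
  2:{ rewrite cos_minus.
      pose proof (sin2_cos2 A); pose proof (sin2_cos2 B); unfold Rsqr in *; nra. }
  replace (A - B) with (2 * (PI * (a - b))) by (unfold A, B; ring).
  rewrite cos_2a_sin; fold s.
  replace (2 - 2 * (1 - 2 * s * s)) with ((2 * Rabs s) * (2 * Rabs s)).
  - apply sqrt_square; pose proof (Rabs_pos s); lra.
  - replace ((2 * Rabs s) * (2 * Rabs s)) with (4 * (Rabs s * Rabs s)) by ring.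
    rewrite <- Rabs_mult, Rabs_pos_eq by apply Rle_0_sqr; ring.
Qed.

Lemma Rabs_sin_le (x : R) : Rabs (sin x) <= Rabs x.
Proof.
  assert (Hpos : forall y, 0 < y -> Rabs (sin y) <= y).
  { intros y Hy; pose proof (sin_lt_x y Hy); apply Rabs_le; split; [|lra].
    destruct (Rle_lt_dec 1 y); [pose proof (SIN_bound y); lra|].
    assert (0 < sin y) by (apply sin_gt_0; pose proof PI2_1; lra); lra. }
  destruct (Rtotal_order x 0) as [Hx|[->|Hx]].
  - pose proof (Hpos (- x) ltac:(lra)) as H; rewrite sin_neg, Rabs_Ropp in H.
    rewrite (Rabs_left x) by lra; exact H.
  - rewrite sin_0, Rabs_R0; lra.
  - rewrite (Rabs_pos_eq x) by lra; apply Hpos, Hx.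
Qed.

Lemma Cdist_e2pi_le (a b : R) : Cdist (e2pi a) (e2pi b) <= 2 * PI * Rabs (a - b).
Proof.
  rewrite Cdist_e2pi; pose proof (Rabs_sin_le (PI * (a - b))) as H.
  rewrite Rabs_mult, (Rabs_pos_eq PI) in H by (pose proof PI_RGT_0; lra); lra.
Qed.

Lemma Cdist_e2pi_lt (a b eps : R) :
  Rabs (a - b) < eps / (2 * PI) -> Cdist (e2pi a) (e2pi b) < eps.
Proof.
  intros H; pose proof PI_RGT_0; pose proof (Cdist_e2pi_le a b).
  apply (Rmult_lt_compat_l (2 * PI)) in H; [|lra].
  replace (2 * PI * (eps / (2 * PI))) with eps in H by (field; lra); lra.
Qed.

Lemma e2pi_neq (a b : R) : 0 < a - b < 1 -> e2pi a <> e2pi b.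
Proof.
  intros Hab E; pose proof (Cdist_e2pi a b) as D.
  rewrite E, Cdist_refl in D.
  assert (0 < sin (PI * (a - b))) by (apply sin_gt_0; pose proof PI_RGT_0; nra).
  rewrite Rabs_pos_eq in D; lra.
Qed.

Definition closure (A : Cset) : Cset :=
  fun z => forall eps, 0 < eps -> exists w, A w /\ Cdist z w < eps.

Lemma subset_closure (A : Cset) (z : Cplx) : A z -> closure A z.
Proof. intros Az eps He; exists z; rewrite Cdist_refl; auto. Qed.

Lemma closure_closed (A : Cset) : closed_set (closure A).
Proof.
  intros z Hz eps He.
  destruct (Hz (eps / 2)) as [w [Hw Hzw]]; [lra|].
  destruct (Hw (eps / 2)) as [v [Av Hwv]]; [lra|].
  exists v; split; [exact Av|].
  pose proof (Cdist_triangle z w v); lra.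
Qed.

Lemma closure_min (A C : Cset) : closed_set C -> (forall z, A z -> C z) ->
  forall z, closure A z -> C z.
Proof.
  intros HC HAC z Hz; apply HC; intros eps He.
  destruct (Hz eps He) as [w [Aw Hw]]; exists w; auto.
Qed.

Lemma unit_circle_closed : closed_set unit_circle.
Proof.
  intros z Hz; unfold unit_circle.
  destruct (Req_dec (Cmod z) 1) as [E|Ne]; [exact E|exfalso].
  assert (Hd : 0 < Rabs (Cmod z - 1)) by (apply Rabs_pos_lt; lra).
  destruct (Hz _ Hd) as [w [Hw Hzw]]; unfold unit_circle in Hw.
  pose proof (Cmod_le_Cdist z w); pose proof (Cmod_le_Cdist w z).
  rewrite (Cdist_sym w z) in *.
  assert (Rabs (Cmod z - 1) <= Cdist z w) by (apply Rabs_le; lra); lra.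
Qed.

Lemma closure_perfect (A : Cset) :
  (forall w, A w -> forall eps, 0 < eps -> exists v, A v /\ v <> w /\ Cdist w v < eps) ->
  perfect_set (closure A).
Proof.
  intros HA; split; [apply closure_closed|].
  intros z Hz eps He.
  destruct (Hz (eps / 2)) as [w [Aw Hzw]]; [lra|].
  destruct (classic (w = z)) as [<-|Hwz].
  - destruct (HA w Aw eps He) as [v [Av [Hvw Hv]]].
    exists v; repeat split; auto using subset_closure.
  - exists w; repeat split; auto using subset_closure; lra.
Qed.

Lemma closure_unif_pow_to_one (n : nat -> nat) (A : Cset) :
  (forall z, A z -> unit_circle z) -> unif_pow_to_one n A -> unif_pow_to_one n (closure A).
Proof.
  intros HA Hunif eps He.
  destruct (Hunif (eps / 2)) as [N HN]; [lra|].
  exists N; intros k Hk z Hz.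
  pose proof (pos_INR (n k)) as Hnk.
  set (d := eps / 2 / (INR (n k) + 1)).
  assert (Hd : 0 < d) by (apply Rdiv_lt_0_compat; lra).
  destruct (Hz d Hd) as [w [Aw Hzw]].
  assert (Hz1 : unit_circle z)
    by (apply (closure_min A unit_circle unit_circle_closed HA), Hz).
  pose proof (Cdist_Cpow_le z w (n k) Hz1 (HA w Aw)) as Hlip.
  assert (INR (n k) * d < eps / 2).
  { unfold d; apply (Rmult_lt_reg_r (INR (n k) + 1)); [lra|].
    field_simplify; [nra|lra]. }
  pose proof (Cdist_triangle (Cpow z (n k)) (Cpow w (n k)) Cone).
  pose proof (HN k Hk w Aw).
  assert (INR (n k) * Cdist z w <= INR (n k) * d) by (apply Rmult_le_compat_l; lra).
  lra.
Qed.

Lemma exists_increasing_choice (P : nat -> nat -> Prop) :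
  (forall j N, exists k, (N <= k)%nat /\ P j k) ->
  exists kk : nat -> nat, (forall j, (kk j < kk (S j))%nat) /\ forall j, P j (kk j).
Proof.
  intros HP.
  assert (f : forall j N, {k | (N <= k)%nat /\ P j k})
    by (intros j N; apply constructive_indefinite_description, HP).
  set (kk := fix kk j := match j with
                         | O => proj1_sig (f O O)
                         | S i => proj1_sig (f (S i) (S (kk i))) end).
  exists kk; split.
  - intros j; exact (proj1 (proj2_sig (f (S j) (S (kk j))))).
  - intros [|j]; [exact (proj2 (proj2_sig (f O O)))|].
    exact (proj2 (proj2_sig (f (S j) (S (kk j))))).
Qed.

Lemma increasing_lt (phi : nat -> nat) : (forall m, (phi m < phi (S m))%nat) ->
  forall a b, (a < b)%nat -> (phi a < phi b)%nat.
Proof. intros H a b Hab; induction Hab as [|b Hab IH]; [apply H|specialize (H b); lia]. Qed.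

Lemma increasing_ge_id (phi : nat -> nat) : (forall m, (phi m < phi (S m))%nat) ->
  forall m, (m <= phi m)%nat.
Proof. intros H m; induction m as [|m IH]; [lia|specialize (H m); lia]. Qed.

Lemma half_pow_le (a b : nat) : (a <= b)%nat -> (1 / 2) ^ b <= (1 / 2) ^ a.
Proof.
  induction 1 as [|b _ IH]; [lra|].
  simpl; pose proof (pow_lt (1 / 2) b ltac:(lra)); lra.
Qed.

Lemma half_pow_small (c : R) : 0 < c -> exists L : nat, (1 / 2) ^ L < c.
Proof.
  intros Hc.
  destruct (pow_lt_1_zero (1 / 2) ltac:(rewrite Rabs_pos_eq; lra) c Hc) as [L HL].
  exists L; specialize (HL L (le_n L)).
  rewrite Rabs_pos_eq in HL by (left; apply pow_lt; lra); exact HL.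
Qed.

Lemma ValAdh_subseq (a : nat -> R) (l : R) : ValAdh a l ->
  exists phi, (forall m, (phi m < phi (S m))%nat) /\ Un_cv (fun m => a (phi m)) l.
Proof.
  intros Hl.
  destruct (exists_increasing_choice (fun m p => Rabs (a p - l) < (1 / 2) ^ m))
    as [phi [Hinc Hphi]].
  - intros m N.
    assert (Hr : 0 < (1 / 2) ^ m) by (apply pow_lt; lra).
    apply (Hl (disc l (mkposreal _ Hr))).
    exists (mkposreal _ Hr); intros y Hy; exact Hy.
  - exists phi; split; [exact Hinc|].
    intros eps He.
    destruct (half_pow_small eps He) as [M HM].
    exists M; intros m Hm; unfold R_dist.
    pose proof (half_pow_le M m Hm); specialize (Hphi m); lra.
Qed.

Lemma bounded_subseq_cv (a : nat -> R) : (forall m, -1 <= a m <= 1) ->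
  exists phi l, (forall m, (phi m < phi (S m))%nat) /\ Un_cv (fun m => a (phi m)) l.
Proof.
  intros Ha.
  destruct (Bolzano_Weierstrass a (fun x => -1 <= x <= 1) (compact_P3 (-1) 1) Ha)
    as [l Hl].
  destruct (ValAdh_subseq a l Hl) as [phi Hphi]; exists phi, l; exact Hphi.
Qed.

Lemma compact_of_closed_unit_circle (K : Cset) :
  closed_set K -> (forall z, K z -> unit_circle z) -> compact_set K.
Proof.
  intros HK HKT u Hu.
  assert (Hb : forall m, -1 <= fst (u m) <= 1 /\ -1 <= snd (u m) <= 1)
    by (intros m; apply unit_circle_coords, HKT, Hu).
  destruct (bounded_subseq_cv (fun m => fst (u m))) as [phi1 [l1 [Hinc1 Hcv1]]];
    [intros m; apply Hb|].
  destruct (bounded_subseq_cv (fun m => snd (u (phi1 m)))) as [phi2 [l2 [Hinc2 Hcv2]]];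
    [intros m; apply Hb|].
  assert (Hcv : Cseq_cv (fun m => u (phi1 (phi2 m))) (l1, l2)).
  { intros eps He.
    destruct (Hcv1 (eps / 2)) as [N1 HN1]; [lra|].
    destruct (Hcv2 (eps / 2)) as [N2 HN2]; [lra|].
    exists (Nat.max N1 N2); intros m Hm.
    pose proof (Cdist_le_coords (u (phi1 (phi2 m))) (l1, l2)).
    pose proof (HN2 m ltac:(lia)).
    pose proof (HN1 (phi2 m) ltac:(pose proof (increasing_ge_id phi2 Hinc2 m); lia)).
    unfold R_dist in *; simpl in *; lra. }
  exists (fun m => phi1 (phi2 m)), (l1, l2); repeat split.
  - intros m; apply (increasing_lt phi1 Hinc1), Hinc2.
  - apply HK; intros eps He.
    destruct (Hcv eps He) as [N HN].
    exists (u (phi1 (phi2 N))); split; [apply Hu|].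
    rewrite Cdist_sym; apply HN; lia.
  - exact Hcv.
Qed.

Lemma chain_rel_le (Rel : nat -> nat -> Prop) (n : nat -> nat) :
  (forall x, Rel x x) -> (forall x y z, Rel x y -> Rel y z -> Rel x z) ->
  (forall k, Rel (n k) (n (S k))) -> forall a b, (a <= b)%nat -> Rel (n a) (n b).
Proof.
  intros Hrefl Htrans Hstep a b Hab.
  induction Hab as [|b Hab IH]; [apply Hrefl|exact (Htrans _ _ _ IH (Hstep b))].
Qed.

Fixpoint recip_sum (m : nat -> nat) (b : nat -> bool) (J : nat) : R :=
  match J with
  | O => 0
  | S J' => recip_sum m b J' + (if b J' then / INR (m J') else 0)
  end.

Lemma recip_sum_ext (m : nat -> nat) (b b' : nat -> bool) (J : nat) :
  (forall j, (j < J)%nat -> b j = b' j) -> recip_sum m b J = recip_sum m b' J.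
Proof.
  induction J as [|J IH]; intros H; simpl; [reflexivity|].
  rewrite IH, H by (auto; intros; apply H; lia); reflexivity.
Qed.

Lemma recip_sum_extend (m : nat -> nat) (b : nat -> bool) (J J' : nat) :
  (J <= J')%nat -> exists b', recip_sum m b' (S J') = recip_sum m b J + / INR (m J').
Proof.
  intros HJ; exists (fun j => if (j <? J)%nat then b j else (j =? J')%nat).
  simpl; rewrite Nat.eqb_refl.
  replace (J' <? J)%nat with false by (symmetry; apply Nat.ltb_ge; lia).
  f_equal.
  assert (Hmid : forall i, (J <= i <= J')%nat ->
            recip_sum m (fun j => if (j <? J)%nat then b j else (j =? J')%nat) i
            = recip_sum m b J).
  { induction i as [|i IH]; intros Hi.
    - replace J with 0%nat by lia; reflexivity.
    - destruct (Nat.eq_dec J (S i)) as [<-|HJi].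
      + apply recip_sum_ext; intros j Hj.
        now replace (j <? J)%nat with true by (symmetry; apply Nat.ltb_lt; lia).
      + simpl; rewrite IH by lia.
        replace (i <? J)%nat with false by (symmetry; apply Nat.ltb_ge; lia).
        replace (i =? J')%nat with false by (symmetry; apply Nat.eqb_neq; lia).
        ring. }
  apply Hmid; lia.
Qed.

(* Terms with [m j | N] contribute integers; the others are at most [(1/2)^(j+1)] and only
   occur for [j >= L], so together they stay below [(1/2)^L - (1/2)^(max J L)]. *)
Lemma recip_sum_near_integer (N L : nat) (m : nat -> nat) (b : nat -> bool) (J : nat) :
  (forall j, (0 < m j)%nat) ->
  (forall j, Nat.divide (m j) N \/
             ((L <= j)%nat /\ INR N / INR (m j) <= (1 / 2) ^ S j)) ->
  exists p : nat, 0 <= INR N * recip_sum m b J - INR p <= (1 / 2) ^ L.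
Proof.
  intros Hm Hsplit.
  enough (H : exists p : nat, 0 <= INR N * recip_sum m b J - INR p
                              <= (1 / 2) ^ L - (1 / 2) ^ Nat.max J L).
  { destruct H as [p Hp]; exists p; pose proof (pow_lt (1 / 2) (Nat.max J L)); lra. }
  induction J as [|J [p Hp]].
  - exists 0%nat; simpl; lra.
  - assert (Hmono : (1 / 2) ^ Nat.max (S J) L <= (1 / 2) ^ Nat.max J L)
      by (apply half_pow_le; lia).
    simpl recip_sum; destruct (b J); [|exists p; lra].
    destruct (Hsplit J) as [[q Hq]|[HLJ Hsmall]].
    + exists (p + q)%nat; rewrite plus_INR.
      replace (INR N * (recip_sum m b J + / INR (m J)) - (INR p + INR q))
        with (INR N * recip_sum m b J - INR p); [lra|].
      rewrite Hq, mult_INR; field; apply not_0_INR; specialize (Hm J); lia.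
    + exists p.
      rewrite !Nat.max_l in * by lia.
      replace ((1 / 2) ^ J) with (2 * (1 / 2) ^ S J) in Hp by (simpl; field).
      assert (0 <= INR N / INR (m J)).
      { apply Rmult_le_pos; [apply pos_INR|].
        left; apply Rinv_0_lt_compat, lt_0_INR, Hm. }
      unfold Rdiv in *; lra.
Qed.

Section LacunaryPoints.

Variables n kk : nat -> nat.
Hypothesis n_pos : forall k, (0 < n k)%nat.
Hypothesis n_le : forall a b, (a <= b)%nat -> (n a <= n b)%nat.
Hypothesis n_dvd : forall a b, (a <= b)%nat -> Nat.divide (n a) (n b).
Hypothesis kk_inc : forall j, (kk j < kk (S j))%nat.
Hypothesis kk_gap : forall j, INR (n (kk j)) * 2 ^ S j < INR (n (S (kk j))).

Let m (j : nat) : nat := n (S (kk j)).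

Definition lacunary_points : Cset := fun z => exists b J, z = e2pi (recip_sum m b J).

Lemma ratio_le_half_pow (k j : nat) :
  (k <= kk j)%nat -> INR (n k) / INR (m j) <= (1 / 2) ^ S j.
Proof.
  intros Hk.
  pose proof (le_INR _ _ (n_le _ _ Hk)); pose proof (kk_gap j).
  assert (0 < 2 ^ S j) by (apply pow_lt; lra).
  assert (0 < INR (m j)) by apply lt_0_INR, n_pos.
  replace ((1 / 2) ^ S j) with (/ 2 ^ S j) by (rewrite <- pow_inv; f_equal; field).
  apply (Rmult_le_reg_r (INR (m j) * 2 ^ S j)); [nra|].
  replace (INR (n k) / INR (m j) * (INR (m j) * 2 ^ S j)) with (INR (n k) * 2 ^ S j)
    by (field; lra).
  replace (/ 2 ^ S j * (INR (m j) * 2 ^ S j)) with (INR (m j)) by (field; lra).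
  unfold m; nra.
Qed.

Lemma lacunary_points_unit_circle (z : Cplx) : lacunary_points z -> unit_circle z.
Proof. intros [b [J ->]]; apply e2pi_unit_circle. Qed.

Lemma lacunary_points_one : lacunary_points Cone.
Proof. exists (fun _ => false), O; exact (eq_sym (e2pi_nat 0)). Qed.

Lemma lacunary_points_not_isolated (w : Cplx) : lacunary_points w ->
  forall eps, 0 < eps -> exists v, lacunary_points v /\ v <> w /\ Cdist w v < eps.
Proof.
  intros [b [J ->]] eps He.
  pose proof PI_RGT_0 as Hpi.
  destruct (half_pow_small (eps / (2 * PI))) as [L HL];
    [apply Rdiv_lt_0_compat; lra|].
  set (J' := Nat.max J L).
  destruct (recip_sum_extend m b J J') as [b' Hb']; [lia|].
  set (x := recip_sum m b J) in *; set (r := / INR (m J')) in *.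
  assert (Hr0 : 0 < r) by apply Rinv_0_lt_compat, lt_0_INR, n_pos.
  assert (Hr : r <= (1 / 2) ^ S J').
  { apply Rle_trans with (INR (n 0) * r); [|exact (ratio_le_half_pow 0 J' ltac:(lia))].
    pose proof (le_INR _ _ (n_pos 0)); simpl INR in *; nra. }
  pose proof (half_pow_le 1 (S J') ltac:(lia)).
  pose proof (half_pow_le L (S J') ltac:(lia)).
  exists (e2pi (recip_sum m b' (S J'))); rewrite Hb'; repeat split.
  - exists b', (S J'); rewrite Hb'; reflexivity.
  - apply e2pi_neq; simpl in *; lra.
  - apply Cdist_e2pi_lt.
    replace (x - (x + r)) with (- r) by ring; rewrite Rabs_Ropp, Rabs_pos_eq; lra.
Qed.

Lemma lacunary_points_unif : unif_pow_to_one n lacunary_points.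
Proof.
  intros eps He.
  pose proof PI_RGT_0 as Hpi.
  destruct (half_pow_small (eps / (2 * PI))) as [L HL];
    [apply Rdiv_lt_0_compat; lra|].
  exists (kk L); intros k Hk w [b [J ->]].
  destruct (recip_sum_near_integer (n k) L m b J) as [p Hp].
  - intros j; apply n_pos.
  - intros j; destruct (le_lt_dec (S (kk j)) k) as [Hjk|Hkj];
      [left; apply n_dvd, Hjk|].
    right; split; [|apply ratio_le_half_pow; lia].
    destruct (le_lt_dec L j) as [|HjL]; [assumption|].
    pose proof (increasing_lt kk kk_inc j L HjL); lia.
  - rewrite Cpow_e2pi, <- (e2pi_nat p).
    apply Cdist_e2pi_lt; rewrite Rabs_pos_eq; lra.
Qed.

End LacunaryPoints.

Theorem proposition3p7 (n : nat -> nat)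
  (hpos : (0 < n 0%nat)%nat)
  (hinc : forall k, (n k < n (S k))%nat)
  (hdiv : forall k, Nat.divide (n k) (n (S k)))
  (hlimsup : forall (M : R) (N : nat), exists k, (N <= k)%nat /\
               M < INR (n (S k)) / INR (n k)) :
  exists K : Cset,
    (forall z, K z -> unit_circle z) /\
    compact_set K /\ perfect_set K /\ K Cone /\
    unif_pow_to_one n K.
Proof.
  pose proof (chain_rel_le le n Nat.le_refl Nat.le_trans
                (fun k => Nat.lt_le_incl _ _ (hinc k))) as n_le.
  pose proof (chain_rel_le Nat.divide n Nat.divide_refl Nat.divide_trans hdiv) as n_dvd.
  assert (n_pos : forall k, (0 < n k)%nat) by (intros k; specialize (n_le 0%nat k); lia).
  destruct (exists_increasing_choice
              (fun j k => INR (n k) * 2 ^ S j < INR (n (S k)))) as [kk [kk_inc kk_gap]].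
  { intros j N; destruct (hlimsup (2 ^ S j) N) as [k [Hk Hratio]].
    exists k; split; [exact Hk|].
    apply (Rmult_lt_compat_r (INR (n k))) in Hratio; [|apply lt_0_INR, n_pos].
    unfold Rdiv in Hratio; rewrite Rmult_assoc, Rinv_l, Rmult_1_r in Hratio;
      [lra|apply not_0_INR; specialize (n_pos k); lia]. }
  set (E := lacunary_points n kk).
  assert (HET : forall z, closure E z -> unit_circle z).
  { apply closure_min; [exact unit_circle_closed|apply lacunary_points_unit_circle]. }
  exists (closure E); split; [|split; [|split; [|split]]].
  - exact HET.
  - apply compact_of_closed_unit_circle; [apply closure_closed|exact HET].
  - apply closure_perfect, lacunary_points_not_isolated; assumption.
  - apply subset_closure, lacunary_points_one.
  - apply closure_unif_pow_to_one; [apply lacunary_points_unit_circle|].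
    apply lacunary_points_unif; assumption.
Qed.
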